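(* Let $G$ be a connected graph in $\mathcal{C}$ and $C$ an induced $C_5$ in $G$ with vertices $0,\dots,4$ in cyclic order. Then for every $i$ (indices mod 5), there is no edge between $X_i$ and $Y_{i+1}\cup Y_{i+2}\cup Y_{i+4}$.
   Context: $\mathcal{C}=\mathrm{Free}(\text{claw}, 4K_1, \text{5-wheel}, C_5\text{-twin}, P_5\text{-twin}, K_5-e)$, where $\mathrm{Free}(L)$ is the class of graphs with no induced subgraph isomorphic to a member of $L$; the claw is $K_{1,3}$; $4K_1$ is the edgeless graph on 4 vertices; the 5-wheel is $C_5$ plus a vertex adjacent to all five cycle vertices; the $C_5$-twin is $C_5$ plus a new vertex adjacent to one cycle vertex $v$ and both cycle-neighbours of $v$; the $P_5$-twin is a path $p_1p_2p_3p_4p_5$ plus a new vertex adjacent to exactly $p_2,p_3,p_4$; $K_5-e$ is $K_5$ minus one edge. Given an induced cycle $C$ of length 5 with vertices $0,\dots,4$ in cyclic order (indices taken mod 5): $R$ is the set of vertices outside $C$ with no neighbour in $C$; $X_j$ is the set of vertices outside $C$ whose neighbourhood in $C$ is exactly $\{j,j+1\}$; $Y_j$ is the set of vertices outside $C$ whose neighbourhood in $C$ is exactly $\{j,j+1,j+2,j+3\}$; $X=\bigcup_j X_j$, $Y=\bigcup_j Y_j$. *)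

From mathcomp Require Import all_boot.
Set Implicit Arguments. Unset Strict Implicit. Unset Printing Implicit Defensive.

Definition simple_graph (T : finType) (e : rel T) : Prop :=
  symmetric e /\ irreflexive e.

Definition connected_graph (T : finType) (e : rel T) : Prop :=
  forall x y : T, connect e x y.

Definition graph_of (n : nat) (es : seq (nat * nat)) : rel 'I_n :=
  fun a b => ((val a, val b) \in es) || ((val b, val a) \in es).
Arguments graph_of : clear implicits.

Definition induces (T : finType) (e : rel T) (n : nat) (h : rel 'I_n) : Prop :=
  exists f : 'I_n -> T, injective f /\ forall a b, e (f a) (f b) = h a b.

Definition claw := graph_of 4 [:: (0,1); (0,2); (0,3)].
Definition K1_4 := graph_of 4 [::].
Definition wheel5 := graph_of 6
  [:: (0,1); (1,2); (2,3); (3,4); (4,0); (5,0); (5,1); (5,2); (5,3); (5,4)].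
(* C5 plus a vertex adjacent to v = 0 and its two cycle-neighbours 1, 4 *)
Definition C5_twin := graph_of 6
  [:: (0,1); (1,2); (2,3); (3,4); (4,0); (5,0); (5,1); (5,4)].
(* path 0-1-2-3-4 plus a vertex adjacent to exactly 1,2,3 *)
Definition P5_twin := graph_of 6
  [:: (0,1); (1,2); (2,3); (3,4); (5,1); (5,2); (5,3)].
Definition K5_minus_e := graph_of 5
  [:: (0,2); (0,3); (0,4); (1,2); (1,3); (1,4); (2,3); (2,4); (3,4)].

Definition in_class (T : finType) (e : rel T) : Prop :=
  ~ induces e claw /\ ~ induces e K1_4 /\ ~ induces e wheel5 /\
  ~ induces e C5_twin /\ ~ induces e P5_twin /\ ~ induces e K5_minus_e.

Definition addI5 (i : 'I_5) (k : nat) : 'I_5 := inord ((val i + k) %% 5).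

Definition induced_C5 (T : finType) (e : rel T) (c : 'I_5 -> T) : Prop :=
  injective c /\
  forall i j : 'I_5, e (c i) (c j) = (j == addI5 i 1) || (i == addI5 j 1).

Definition outside (T : finType) (c : 'I_5 -> T) (v : T) : Prop :=
  forall k : 'I_5, v != c k.

Definition inX (T : finType) (e : rel T) (c : 'I_5 -> T) (j : 'I_5) (v : T) : Prop :=
  outside c v /\ forall k : 'I_5, e v (c k) = (k == j) || (k == addI5 j 1).

Definition inY (T : finType) (e : rel T) (c : 'I_5 -> T) (j : 'I_5) (v : T) : Prop :=
  outside c v /\
  forall k : 'I_5, e v (c k) =
    [|| k == j, k == addI5 j 1, k == addI5 j 2 | k == addI5 j 3].

From mathcomp Require Import all_boot.

(* Whichever of Y_(i+1), Y_(i+2), Y_(i+4) contains y, it sees both i+2 and i+4,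
   which are non-adjacent on C and are not seen by x in X_i.  So an edge xy
   would make y the centre of a claw with leaves x, i+2 and i+4. *)

Set Implicit Arguments.
Unset Strict Implicit.
Unset Printing Implicit Defensive.

Section Claw.

Variables (T : finType) (e : rel T).
Hypotheses (e_sym : symmetric e) (e_irr : irreflexive e).

Lemma induces_claw (y x a b : T) :
  e y x -> e y a -> e y b -> ~~ e x a -> ~~ e x b -> ~~ e a b ->
  x != a -> x != b -> a != b -> induces e claw.
Proof.
move=> yx ya yb /negbTE xa /negbTE xb /negbTE ab x_a x_b a_b.
have neq_y z : e y z -> y != z by apply: contraTneq => <-; rewrite e_irr.
have uniq_yxab : uniq [:: y; x; a; b].
  by rewrite /= !inE !negb_or x_a x_b a_b !neq_y.
exists (fun k : 'I_4 => nth y [:: y; x; a; b] k); split.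
  by move=> k l /eqP; rewrite nth_uniq // => /eqP/val_inj.
have [xy ay yb'] : [/\ e x y, e a y & e b y] by rewrite !(e_sym _ y).
have [ax bx ba] : [/\ e a x = false, e b x = false & e b a = false].
  by rewrite !(e_sym a) !(e_sym b).
by case=> [[|[|[|[|//]]]] ?] [[|[|[|[|//]]]] ?];
  rewrite /claw /graph_of /= ?e_irr ?yx ?ya ?yb ?xy ?ay ?yb' ?xa ?xb ?ab ?ax ?bx ?ba.
Qed.

End Claw.

Lemma addI5E (i : 'I_5) k : val (addI5 i k) = (i + k) %% 5.
Proof. by rewrite /addI5 /= inordK // ltn_mod. Qed.

Lemma addI5A (i : 'I_5) a b : addI5 (addI5 i a) b = addI5 i (a + b).
Proof. by apply/val_inj; rewrite !addI5E modnDml addnA. Qed.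

Lemma eq_addI5 (i : 'I_5) a b : (addI5 i a == addI5 i b) = (a == b %[mod 5]).
Proof. by rewrite -val_eqE !addI5E eqn_modDl. Qed.

Lemma addI50 (i : 'I_5) : addI5 i 0 = i.
Proof. by apply/val_inj; rewrite addI5E addn0 modn_small. Qed.

Lemma addI5_eq_id (i : 'I_5) a : (addI5 i a == i) = (a == 0 %[mod 5]).
Proof. by rewrite -{2}(addI50 i) eq_addI5. Qed.

Section InducedC5.

Variables (T : finType) (e : rel T) (c : 'I_5 -> T).

Lemma induced_C5_nonadj_2_4 (i : 'I_5) :
  induced_C5 e c -> ~~ e (c (addI5 i 2)) (c (addI5 i 4)).
Proof. by case=> _ ->; rewrite !addI5A !eq_addI5. Qed.

Lemma inX_nonadj_2_4 (i : 'I_5) x :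
  inX e c i x -> ~~ e x (c (addI5 i 2)) /\ ~~ e x (c (addI5 i 4)).
Proof. by case=> _ Ex; rewrite !Ex !eq_addI5 !addI5_eq_id. Qed.

Lemma inY_adj_2_4 (i : 'I_5) y :
  inY e c (addI5 i 1) y \/ inY e c (addI5 i 2) y \/ inY e c (addI5 i 4) y ->
  e y (c (addI5 i 2)) /\ e y (c (addI5 i 4)).
Proof. by case=> [|[]] [_ Ey]; rewrite !Ey !addI5A !eq_addI5 ?orbT. Qed.

End InducedC5.

Theorem claim8 (T : finType) (e : rel T) (c : 'I_5 -> T) :
  simple_graph e -> connected_graph e -> in_class e -> induced_C5 e c ->
  forall (i : 'I_5) (x y : T),
    inX e c i x ->
    inY e c (addI5 i 1) y \/ inY e c (addI5 i 2) y \/ inY e c (addI5 i 4) y ->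
    ~~ e x y.
Proof.
move=> [e_sym e_irr] _ [no_claw _] C5 i x y Xx Yy.
apply/negP => exy; apply: no_claw.
have [ya yb] := inY_adj_2_4 Yy.
have [xa xb] := inX_nonadj_2_4 Xx.
have [[x_out _] [c_inj _]] := (Xx, C5).
have yx : e y x by rewrite e_sym.
apply: (induces_claw e_sym e_irr yx ya yb xa xb (induced_C5_nonadj_2_4 i C5)
                    (x_out _) (x_out _)).
by rewrite (inj_eq c_inj) eq_addI5.
Qed.
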